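(* Let $\Lambda$ be a left cancellative small category, $v\in\Lambda^0$, and let $C\subseteq\mathcal D^{(0)}_v$ be a filter. Then $C\in v\Lambda^{**}$ if and only if for every $F\in\mathcal D^{(0)}_v$ such that $F\cap E\ne\varnothing$ for all $E\in C$, there exists $E\in C$ with $E\subseteq F$.
   Context: A left cancellative small category (LCSC) is a small category $\Lambda$ such that $\alpha\beta=\alpha\gamma$ implies $\beta=\gamma$. Composition $\alpha\beta$ is defined when $s(\alpha)=r(\beta)$; $\Lambda^0$ is the set of objects; $v\Lambda=\{\alpha:r(\alpha)=v\}$. For $\alpha\in\Lambda$, $\tau^\alpha(\beta)=\alpha\beta$ on $s(\alpha)\Lambda$ and $\sigma^\alpha:\alpha\Lambda\to s(\alpha)\Lambda$ is its inverse. A zigzag is a tuple $\zeta=(\alpha_1,\beta_1,\dots,\alpha_n,\beta_n)$ with $r(\alpha_i)=r(\beta_i)$ and $s(\alpha_{i+1})=s(\beta_i)$, $s(\zeta)=s(\beta_n)$; the zigzag map $\varphi_\zeta=\sigma^{\alpha_1}\circ\tau^{\beta_1}\circ\cdots\circ\sigma^{\alpha_n}\circ\tau^{\beta_n}$ (partial map) has domain $A(\zeta)\subseteq s(\zeta)\Lambda$. $\mathcal D^{(0)}_v$ is the set of nonempty $A(\zeta)$ with $s(\zeta)=v$ (closed under nonempty intersection). A filter in $\mathcal D^{(0)}_v$ is a nonempty $C\subseteq\mathcal D^{(0)}_v$ closed under intersection and under supersets within $\mathcal D^{(0)}_v$. A finite $\mathcal F\subseteq\mathcal D^{(0)}_v$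 covers the filter $C$ if some $E\in C$ satisfies $E\subseteq\bigcup\mathcal F$. $v\Lambda^*$ is the set of filters $C$ in $\mathcal D^{(0)}_v$ such that every finite $\mathcal F\subseteq\mathcal D^{(0)}_v$ with $\mathcal F\cap C=\varnothing$ does not cover $C$. $v\Lambda^{**}$ is the set of maximal elements of $v\Lambda^*$ with respect to inclusion. *)

From Stdlib Require Import List.
Import ListNotations.

(* Composition is a total function whose
   values are only constrained (and only ever used) when [src a = rng b];
   all axioms are guarded accordingly. *)
Record LCSC := {
  Obj : Type;
  Mor : Type;
  rng : Mor -> Obj;
  src : Mor -> Obj;
  idm : Obj -> Mor;
  comp : Mor -> Mor -> Mor;
  rng_idm : forall v, rng (idm v) = v;
  src_idm : forall v, src (idm v) = v;
  rng_comp : forall a b, src a = rng b -> rng (comp a b) = rng a;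
  src_comp : forall a b, src a = rng b -> src (comp a b) = src b;
  comp_idl : forall a, comp (idm (rng a)) a = a;
  comp_idr : forall a, comp a (idm (src a)) = a;
  comp_assoc : forall a b c, src a = rng b -> src b = rng c ->
      comp a (comp b c) = comp (comp a b) c;
  left_cancel : forall a b c, src a = rng b -> src a = rng c ->
      comp a b = comp a c -> b = c
}.

Arguments rng {l}. Arguments src {l}. Arguments idm {l}. Arguments comp {l}.

Section Zigzag.
Variable L : LCSC.

(* A zigzag (a_1,b_1,...,a_n,b_n), n >= 1, stored as the list of pairs
   [(a_1,b_1); ...; (a_n,b_n)], with source s(zeta) = v. *)
Fixpoint zz_ok (l : list (Mor L * Mor L)) (v : Obj L) : Prop :=
  match l with
  | [] => False
  | p :: rest =>
      rng (fst p) = rng (snd p) /\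
      match rest with
      | [] => src (snd p) = v
      | q :: _ => src (fst q) = src (snd p) /\ zz_ok rest v
      end
  end.

(* Graph of the partial zigzag map
   phi = sigma^{a_1} o tau^{b_1} o ... o sigma^{a_n} o tau^{b_n}:
   zz_graph l x y  means  phi_l(x) is defined and equals y. *)
Fixpoint zz_graph (l : list (Mor L * Mor L)) (x y : Mor L) : Prop :=
  match l with
  | [] => x = y
  | p :: rest =>
      exists z, zz_graph rest x z /\ src (snd p) = rng z /\
                src (fst p) = rng y /\ comp (snd p) z = comp (fst p) y
  end.

Definition zz_dom (l : list (Mor L * Mor L)) (v : Obj L) : Mor L -> Prop :=
  fun x => rng x = v /\ exists y, zz_graph l x y.

Definition D0 (v : Obj L) (E : Mor L -> Prop) : Prop :=
  (exists l, zz_ok l v /\ forall x, E x <-> zz_dom l v x) /\ (exists x, E x).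

Definition subset (E F : Mor L -> Prop) : Prop := forall x, E x -> F x.

Definition is_filter (v : Obj L) (C : (Mor L -> Prop) -> Prop) : Prop :=
  (exists E, C E) /\
  (forall E, C E -> D0 v E) /\
  (forall E F, C E -> C F -> C (fun x => E x /\ F x)) /\
  (forall E F, C E -> D0 v F -> subset E F -> C F).

Definition covers (Fs : list (Mor L -> Prop)) (C : (Mor L -> Prop) -> Prop) : Prop :=
  exists E, C E /\ forall x, E x -> exists F, In F Fs /\ F x.

Definition in_star (v : Obj L) (C : (Mor L -> Prop) -> Prop) : Prop :=
  is_filter v C /\
  forall Fs : list (Mor L -> Prop),
    (forall F, In F Fs -> D0 v F) ->
    (forall F, In F Fs -> ~ C F) ->
    ~ covers Fs C.

Definition in_star2 (v : Obj L) (C : (Mor L -> Prop) -> Prop) : Prop :=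
  in_star v C /\
  forall C', in_star v C' -> (forall E, C E -> C' E) -> (forall E, C' E -> C E).

End Zigzag.

Arguments zz_ok {L}. Arguments zz_graph {L}. Arguments zz_dom {L}.
Arguments D0 {L}. Arguments subset {L}. Arguments is_filter {L}.
Arguments covers {L}. Arguments in_star {L}. Arguments in_star2 {L}.

(* Call a filter C in D^(0)_v an ultrafilter when it contains every F in D^(0)_v
   that meets all members of C; these are exactly the elements of v Lambda^**.

   The key fact is that D^(0)_v is closed under nonempty intersections: by left
   cancellation zigzag maps are injective, so the zigzag obtained by following
   zeta with its reverse has the identity of A(zeta) as its map, and
   A(zeta) /\ A(zeta') is the domain of the concatenation of two such loops.
   An ultrafilter C lies in v Lambda^*: each F_i not in C misses some E_i in C,
   and the intersection of the E_i is a member of C not covered by the F_i.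
   It is maximal there, since a member of a larger filter meets all members of
   C.  Conversely, if C is maximal in v Lambda^* and F meets all members of C,
   a Zorn-maximal filter containing C and F is an ultrafilter, hence lies in
   v Lambda^*, hence equals C. *)

From Stdlib Require Import List Classical.
From mathcomp Require classical_sets.
Import ListNotations.

Section Zigzags.
Variable L : LCSC.

Fixpoint rev_zz (l : list (Mor L * Mor L)) : list (Mor L * Mor L) :=
  match l with
  | [] => []
  | p :: r => rev_zz r ++ [(snd p, fst p)]
  end.

Lemma zz_graph_app (l1 l2 : list (Mor L * Mor L)) x y :
  zz_graph (l1 ++ l2) x y <-> exists z, zz_graph l2 x z /\ zz_graph l1 z y.
Proof.
  revert y; induction l1 as [|p l1 IH]; intro y; simpl.
  - split; [intro; exists y; auto | intros [z [H1 H2]]; subst; auto].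
  - split.
    + intros [z [Hz Hp]]. apply IH in Hz. destruct Hz as [w [H1 H2]].
      exists w; split; [auto | exists z; auto].
    + intros [w [H1 [z [H2 Hp]]]]. exists z; split; [apply IH; exists w; auto | auto].
Qed.

Lemma zz_graph_rev (l : list (Mor L * Mor L)) x y :
  zz_graph (rev_zz l) y x <-> zz_graph l x y.
Proof.
  revert x y; induction l as [|p l IH]; intros x y; simpl.
  - split; intro; subst; auto.
  - rewrite zz_graph_app. split.
    + intros [z [[z' [<- [H1 [H2 H3]]]] Hz]]. simpl in *.
      exists z. split; [apply IH; exact Hz | auto].
    + intros [z [Hz [H1 [H2 H3]]]]. exists z.
      split; [exists y; simpl; auto | apply IH; exact Hz].
Qed.

Lemma zz_graph_inj (l : list (Mor L * Mor L)) x w y :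
  zz_graph l x y -> zz_graph l w y -> x = w.
Proof.
  revert x w y; induction l as [|p l IH]; intros x w y; simpl.
  - intros; subst; auto.
  - intros [z [Hz [H1 [H2 H3]]]] [z' [Hz' [H1' [H2' H3']]]].
    assert (z = z') as <- by (apply (left_cancel L (snd p)); congruence).
    eapply IH; eauto.
Qed.

Lemma zz_graph_rev_app (l : list (Mor L * Mor L)) x y :
  zz_graph (rev_zz l ++ l) x y <-> x = y /\ exists z, zz_graph l x z.
Proof.
  rewrite zz_graph_app. split.
  - intros [z [Hxz Hzy]]. apply (zz_graph_rev l y z) in Hzy.
    split; [exact (zz_graph_inj l x y z Hxz Hzy) | eauto].
  - intros [<- [z Hxz]]. exists z. split; [exact Hxz | apply zz_graph_rev; exact Hxz].
Qed.

Lemma zz_ok_app (l1 : list (Mor L * Mor L)) w q l2 v :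
  zz_ok l1 w -> zz_ok (q :: l2) v -> src (fst q) = w -> zz_ok (l1 ++ q :: l2) v.
Proof.
  revert w; induction l1 as [|p l1 IH]; intros w H1 H2 H3; [contradiction|].
  destruct l1 as [|p' l1]; simpl in *.
  - destruct H1 as [A B]. split; [exact A | split; [congruence | exact H2]].
  - destruct H1 as [A [B C]]. split; [exact A | split; [exact B | exact (IH w C H2 H3)]].
Qed.

Lemma zz_ok_rev (l : list (Mor L * Mor L)) p v :
  zz_ok (p :: l) v -> zz_ok (rev_zz (p :: l)) (src (fst p)).
Proof.
  revert p; induction l as [|q l IH]; intros p H; simpl in H.
  - destruct H as [A _]. simpl. auto.
  - destruct H as [A [B C]]. apply IH in C.
    apply (zz_ok_app _ (src (fst q))); [exact C | simpl; auto | simpl; congruence].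
Qed.

Lemma zz_rev_head (l : list (Mor L * Mor L)) v :
  zz_ok l v -> exists q r, rev_zz l = q :: r /\ src (fst q) = v.
Proof.
  induction l as [|p l IH]; intro H; [contradiction|].
  destruct l as [|p' l]; simpl in H.
  - exists (snd p, fst p), []. split; [reflexivity | apply H].
  - destruct H as [_ [_ C]]. destruct (IH C) as [q [r [E F]]].
    change (rev_zz (p :: p' :: l)) with (rev_zz (p' :: l) ++ [(snd p, fst p)]).
    rewrite E. exists q, (r ++ [(snd p, fst p)]). auto.
Qed.

(* A zigzag from s(zeta) = w back to w, so that such zigzags can be concatenated. *)
Definition zz_loop (l : list (Mor L * Mor L)) (w : Obj L) : Prop :=
  zz_ok l w /\ exists q r, l = q :: r /\ src (fst q) = w.

Lemma zz_loop_app (l1 l2 : list (Mor L * Mor L)) w :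
  zz_loop l1 w -> zz_loop l2 w -> zz_loop (l1 ++ l2) w.
Proof.
  intros [ok1 [q1 [r1 [-> S1]]]] [ok2 [q2 [r2 [-> S2]]]]. split.
  - exact (zz_ok_app _ w _ _ _ ok1 ok2 S2).
  - exists q1, (r1 ++ q2 :: r2). auto.
Qed.

Lemma zz_loop_rev_app (l : list (Mor L * Mor L)) w :
  zz_ok l w -> zz_loop (rev_zz l ++ l) w.
Proof.
  intro ok. destruct (zz_rev_head l w ok) as [q [r [E S]]].
  destruct l as [|p l]; [contradiction|]. split.
  - rewrite E. apply (zz_ok_app _ (src (fst p))); auto.
    rewrite <- E. eapply zz_ok_rev; eauto.
  - rewrite E. exists q, (r ++ p :: l). auto.
Qed.

Lemma D0_inter (v : Obj L) (E F : Mor L -> Prop) :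
  D0 v E -> D0 v F -> (exists x, E x /\ F x) -> D0 v (fun x => E x /\ F x).
Proof.
  intros [[l1 [ok1 HE]] _] [[l2 [ok2 HF]] _] ne. split; [|exact ne].
  exists ((rev_zz l1 ++ l1) ++ (rev_zz l2 ++ l2)). split.
  - apply zz_loop_app; apply zz_loop_rev_app; assumption.
  - intro x. rewrite HE, HF. unfold zz_dom. split.
    + intros [[R [y1 G1]] [_ [y2 G2]]]. split; [exact R|]. exists x.
      apply zz_graph_app. exists x. split; apply zz_graph_rev_app; eauto.
    + intros [R [y G]]. apply zz_graph_app in G. destruct G as [z [G2 G1]].
      apply zz_graph_rev_app in G2. destruct G2 as [<- H2].
      apply zz_graph_rev_app in G1. destruct G1 as [_ H1].
      split; split; auto.
Qed.

End Zigzags.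

Section Filters.
Variables (L : LCSC) (v : Obj L).

Definition meets (F : Mor L -> Prop) (U : (Mor L -> Prop) -> Prop) : Prop :=
  forall E, U E -> exists x, F x /\ E x.

Definition ultra (U : (Mor L -> Prop) -> Prop) : Prop :=
  forall F, D0 v F -> meets F U -> U F.

(* [is_filter v U] is convertible to [(exists E, U E) /\ filter_laws U]. *)
Definition filter_laws (U : (Mor L -> Prop) -> Prop) : Prop :=
  (forall E, U E -> D0 v E) /\
  (forall E F, U E -> U F -> U (fun x => E x /\ F x)) /\
  (forall E F, U E -> D0 v F -> subset E F -> U F).

Definition adjoin (U : (Mor L -> Prop) -> Prop) (F : Mor L -> Prop) :
    (Mor L -> Prop) -> Prop :=
  fun G => D0 v G /\ exists E, U E /\ forall x, E x -> F x -> G x.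

Lemma is_filter_adjoin U F :
  is_filter v U -> D0 v F -> meets F U -> is_filter v (adjoin U F).
Proof.
  intros [[E0 UE0] [_ [inter _]]] DF mF. split; [|split; [|split]].
  - exists F. split; [exact DF | exists E0; auto].
  - intros G [DG _]; exact DG.
  - intros G1 G2 [D1 [E1 [U1 S1]]] [D2 [E2 [U2 S2]]].
    destruct (mF _ (inter _ _ U1 U2)) as [x [Fx [E1x E2x]]]. split.
    + apply D0_inter; auto. exists x; auto.
    + exists (fun x => E1 x /\ E2 x). split; [auto | intros y [] Fy; auto].
  - intros G1 G2 [_ [E1 [U1 S1]]] D2 S. split; [exact D2 | exists E1; split; auto].
Qed.

Lemma adjoin_sub U F : is_filter v U -> forall E, U E -> adjoin U F E.
Proof. intros [_ [d0 _]] E UE. split; [auto | exists E; auto]. Qed.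

Lemma adjoin_mem U F : is_filter v U -> D0 v F -> adjoin U F F.
Proof. intros [[E UE] _] DF. split; [exact DF | exists E; auto]. Qed.

Lemma ultra_in_star U : is_filter v U -> ultra U -> in_star v U.
Proof.
  intros FU UU. split; [exact FU|].
  destruct FU as [_ [d0 [inter _]]].
  intros Fs DFs nFs [E0 [UE0 cov]].
  revert E0 UE0 cov. induction Fs as [|F Fs IH]; intros E0 UE0 cov.
  - destruct (d0 _ UE0) as [_ [x Ex]]. destruct (cov x Ex) as [F [[] _]].
  - assert (exists E1, U E1 /\ forall x, ~ (F x /\ E1 x)) as [E1 [U1 D1]].
    { apply NNPP; intro N. apply (nFs F (or_introl eq_refl)).
      apply UU; [apply DFs; left; reflexivity|].
      intros E UE. apply NNPP; intro N2. apply N. exists E. split; [exact UE|].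
      intros x Hx. apply N2; eauto. }
    apply (IH (fun F' I => DFs F' (or_intror I)) (fun F' I => nFs F' (or_intror I))
             (fun x => E0 x /\ E1 x) (inter _ _ UE0 U1)).
    intros x [E0x E1x]. destruct (cov x E0x) as [F' [[<- | I] F'x]].
    + exfalso. apply (D1 x); auto.
    + eauto.
Qed.

Lemma filter_laws_chain_union (Fm : ((Mor L -> Prop) -> Prop) -> Prop) :
  (forall X, Fm X -> filter_laws X) ->
  (forall X Y, Fm X -> Fm Y -> (forall E, X E -> Y E) \/ (forall E, Y E -> X E)) ->
  filter_laws (fun E => exists2 X, Fm X & X E).
Proof.
  intros laws total. split; [|split].
  - intros E [X FX XE]. exact (proj1 (laws X FX) E XE).
  - intros E G [X FX XE] [Y FY YG].
    destruct (total X Y FX FY) as [XY | YX].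
    + exists Y; [exact FY | apply (laws Y FY); auto].
    + exists X; [exact FX | apply (laws X FX); auto].
  - intros E G [X FX XE] DG S. exists X; [exact FX | apply (laws X FX) with E; auto].
Qed.

Lemma maximal_filter_above U :
  is_filter v U ->
  exists A, is_filter v A /\ (forall E, U E -> A E) /\
    forall B, is_filter v B -> (forall E, A E -> B E) -> forall E, B E -> A E.
Proof.
  intros [neU lawsU].
  (* The second conjunct makes the empty union of the empty chain admissible. *)
  set (P := fun X => filter_laws X /\ ((exists E, X E) -> forall E, U E -> X E)).
  destruct (@classical_sets.Zorn_bigcup _ P) as [A [[lawsA UA] maxA]].
  - intros Fm FP total. split.
    + apply filter_laws_chain_union; [intros X FX; apply FP, FX | exact total].
    + intros [E [X FX XE]] G UG. exists X; [exact FX | apply (FP X FX); eauto].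
  - assert (neA : exists E, A E).
    { apply NNPP; intro emptyA. apply (maxA U).
      - split; [intros E AE; exfalso; eauto | intro UA'].
        destruct neU as [E UE]. apply emptyA; eauto.
      - split; [exact lawsU | auto]. }
    exists A. split; [exact (conj neA lawsA) | split; [exact (UA neA)|]].
    intros B [neB lawsB] AB E BE. apply NNPP; intro nAE. apply (maxA B).
    + split; [exact AB | intro BA; exact (nAE (BA E BE))].
    + split; [exact lawsB | intros _ G UG; apply AB, (UA neA), UG].
Qed.

Lemma maximal_filter_ultra A :
  is_filter v A ->
  (forall B, is_filter v B -> (forall E, A E -> B E) -> forall E, B E -> A E) ->
  ultra A.
Proof.
  intros FA maxA H DH mH.
  apply (maxA (adjoin A H)); [apply is_filter_adjoin; auto | apply adjoin_sub; auto |].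
  apply adjoin_mem; auto.
Qed.

Lemma in_star2_ultra C : in_star2 v C -> ultra C.
Proof.
  intros [[FC _] maxC] F DF mF.
  destruct (maximal_filter_above (adjoin C F)) as [A [FA [CA maxA]]].
  { apply is_filter_adjoin; auto. }
  apply (maxC A).
  - apply ultra_in_star; [exact FA | apply maximal_filter_ultra; auto].
  - intros E CE. apply CA, adjoin_sub; auto.
  - apply CA, adjoin_mem; auto.
Qed.

Lemma ultra_in_star2 C : is_filter v C -> ultra C -> in_star2 v C.
Proof.
  intros FC UC. split; [apply ultra_in_star; auto|].
  intros C' [[_ [d0' [inter' _]]] _] CC' E' C'E'.
  apply UC; [exact (d0' _ C'E')|].
  intros E CE. destruct (d0' _ (inter' _ _ C'E' (CC' _ CE))) as [_ [x Hx]]. eauto.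
Qed.

Lemma ultra_iff_contains_subset C :
  is_filter v C ->
  ultra C <-> forall F, D0 v F -> meets F C -> exists E, C E /\ subset E F.
Proof.
  intros [_ [_ [_ up]]]. split.
  - intros UC F DF mF. exists F. split; [apply UC; auto | intros x Fx; exact Fx].
  - intros H F DF mF. destruct (H F DF mF) as [E [CE S]]. exact (up E F CE DF S).
Qed.

End Filters.

Theorem mainTheorem11 (L : LCSC) (v : Obj L) (C : (Mor L -> Prop) -> Prop) :
  is_filter v C ->
  (in_star2 v C <->
   (forall F : Mor L -> Prop, D0 v F ->
      (forall E, C E -> exists x, F x /\ E x) ->
      exists E, C E /\ subset E F)).
Proof.
  intro FC.
  transitivity (ultra L v C).
  - split; [apply in_star2_ultra | apply ultra_in_star2; exact FC].
  - exact (ultra_iff_contains_subset L v C FC).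
Qed.
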